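(* The triangle $T=P_1P_2P_3$ is never equilateral, so its Euler line (the line through its centroid $O$ and its circumcenter) is well defined. Suppose that for each pair of corresponding sides, the lines $P_jP_k$ and $P_j'P_k'$ ($\{j,k\}\subset\{1,2,3\}$) are not parallel. Then the three intersection points $P_jP_k\cap P_j'P_k'$ lie on a line (the perspectrix of the perspective triangles $T$ and $T'=P_1'P_2'P_3'$), and this line is perpendicular to the Euler line of $T$.
   Context: Let $a>b>0$ and $c>0$ with $c^2=a^2-b^2$. Let $\mathcal{E}$ be the ellipse $x^2/a^2+y^2/b^2=1$ with center $O=(0,0)$, parametrized by $P(t)=(a\cos t,b\sin t)$. Fix $u\in\mathbb{R}$, let $M=(a\cos u,b\sin u)$ and $\Delta_u(t)=(x_u(t),y_u(t))$, where $x_u(t)=\frac1a\big(c^2(1+\cos(t+u))\cos t-a^2\cos u\big)$ and $y_u(t)=\frac1b\big(c^2\cos t\sin(t+u)-c^2\sin t-a^2\sin u\big)$ (the negative pedal curve of $\mathcal{E}$ with respect to $M$). For $i=1,2,3$ let $t_i=-u/3-2\pi(i-1)/3$, $P_i=P(t_i)$, $P_i'=\Delta_u(t_i)$ (the cusps). *)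

From Stdlib Require Import Reals.
Open Scope R_scope.

Definition pt := (R * R)%type.

Definition Pe (a b t : R) : pt := (a * cos t, b * sin t).

(* negative pedal curve Delta_u(t) *)
Definition Delta (a b c u t : R) : pt :=
  ( / a * (c ^ 2 * (1 + cos (t + u)) * cos t - a ^ 2 * cos u),
    / b * (c ^ 2 * cos t * sin (t + u) - c ^ 2 * sin t - a ^ 2 * sin u) ).

Definition tcusp (u : R) (i : nat) : R := - u / 3 - 2 * PI * (INR i - 1) / 3.

Definition Pi (a b u : R) (i : nat) : pt := Pe a b (tcusp u i).
Definition Pi' (a b c u : R) (i : nat) : pt := Delta a b c u (tcusp u i).

Definition sqdist (p q : pt) : R := (fst p - fst q) ^ 2 + (snd p - snd q) ^ 2.

Definition equilateral (p q r : pt) : Prop :=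
  sqdist p q = sqdist q r /\ sqdist q r = sqdist r p.

Definition centroid (p q r : pt) : pt :=
  ((fst p + fst q + fst r) / 3, (snd p + snd q + snd r) / 3).

Definition is_circumcenter (C p q r : pt) : Prop :=
  sqdist C p = sqdist C q /\ sqdist C q = sqdist C r.

Definition cross_dir (p q r s : pt) : R :=
  (fst q - fst p) * (snd s - snd r) - (snd q - snd p) * (fst s - fst r).

(* line pq and line rs are not parallel (this presupposes p<>q and r<>s) *)
Definition not_parallel (p q r s : pt) : Prop := cross_dir p q r s <> 0.

Definition on_line (X p q : pt) : Prop :=
  (fst q - fst p) * (snd X - snd p) - (snd q - snd p) * (fst X - fst p) = 0.

Definition on_line_dir (X Q d : pt) : Prop :=
  fst d * (snd X - snd Q) - snd d * (fst X - fst Q) = 0.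

Definition dot (v w : pt) : R := fst v * fst w + snd v * snd w.
Definition vsub (p q : pt) : pt := (fst p - fst q, snd p - snd q).

(* Write t_1, t_2, t_3 for the cusp parameters.  They are a third of a turn apart,
   and each satisfies 3 t_i + u = 0 (mod 2 pi); we call such a t a cusp parameter.

   1. For a cusp parameter s the negative pedal point is an affine function of
      (cos s, sin s) (lemma [cusp_formula]).  Consequently, for a cusp parameter t,
      the side of T opposite P(t) lies on the line  cos t / a x + sin t / b y = -1/2,
      and the side of T' opposite Delta(t) on the line
      a cos t x - b sin t y = -3c^2/4 - (a^2+b^2)/2 cos 2t.
   2. These two lines and the fixed line  b cos u x - a sin u y = abc^2/(a^2+b^2)
      are concurrent: their 3x3 determinant vanishes identically (in t) once
      3t + u = 0 (mod 2 pi).  Hence the three intersection points lie on this fixed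
      line, the perspectrix.
   3. T is the image of an equilateral triangle under diag(a, b): its centroid is the
      origin, it is non-degenerate, and C0 = (c^2 cos u / 4a, -c^2 sin u / 4b) is
      equidistant from its vertices, hence its unique circumcenter.  C0 is nonzero,
      so T is not equilateral, and the Euler line is the line through 0 and C0,
      which is orthogonal to the direction (a sin u, b cos u) of the perspectrix. *)

From Pilot Require Import Defs.
From Stdlib Require Import Reals Lra Psatz.
Open Scope R_scope.

(* Lines in the plane are described as level sets  dot n X = h  of a nonzero normal
   vector n; [cross] is the 2x2 determinant. *)

Definition cross (v w : pt) : R := fst v * snd w - snd v * fst w.
Definition norm2 (v : pt) : R := dot v v.

Definition det3 (n1 : pt) (h1 : R) (n2 : pt) (h2 : R) (n3 : pt) (h3 : R) : R :=
  h1 * cross n2 n3 + h2 * cross n3 n1 + h3 * cross n1 n2.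

Lemma sqdist_pos (P Q : pt) : P <> Q -> 0 < sqdist P Q.
Proof.
  destruct P as [p1 p2], Q as [q1 q2]; unfold sqdist; cbn [fst snd]; intro hPQ.
  destruct (Req_dec p1 q1) as [e1 | n1].
  - destruct (Req_dec p2 q2) as [e2 | n2].
    + subst; contradiction.
    + assert (0 < (p2 - q2) ^ 2) by (rewrite <- Rsqr_pow2; apply Rsqr_pos_lt; lra).
      pose proof (pow2_ge_0 (p1 - q1)); lra.
  - assert (0 < (p1 - q1) ^ 2) by (rewrite <- Rsqr_pow2; apply Rsqr_pos_lt; lra).
    pose proof (pow2_ge_0 (p2 - q2)); lra.
Qed.

Lemma not_parallel_distinct (P Q R S : pt) :
  not_parallel P Q R S -> P <> Q /\ R <> S.
Proof.
  unfold not_parallel, cross_dir; intro h; split; intro e; subst; apply h; ring.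
Qed.

(* If two distinct points P, Q lie on the line  dot n X = h, so does every point of
   the line PQ.  Key identity: |v|^2 (n.w) = (n.v)(v.w) + cross(v,n) cross(v,w). *)
Lemma on_line_level (n : pt) (h : R) (P Q X : pt) :
  dot n P = h -> dot n Q = h -> P <> Q -> on_line X P Q -> dot n X = h.
Proof.
  intros hP hQ hPQ hX.
  pose proof (sqdist_pos P Q hPQ) as hpos.
  assert (key : sqdist P Q * (dot n X - h) =
    (dot n Q - dot n P) * ((fst Q - fst P) * (fst X - fst P) + (snd Q - snd P) * (snd X - snd P))
    + ((fst Q - fst P) * snd n - (snd Q - snd P) * fst n) *
      ((fst Q - fst P) * (snd X - snd P) - (snd Q - snd P) * (fst X - fst P))).
  { rewrite <- hP; destruct n, P, Q, X; unfold sqdist, dot; cbn [fst snd]; ring. }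
  unfold on_line in hX; rewrite hX, hP, hQ in key.
  assert (z : sqdist P Q * (dot n X - h) = 0) by (rewrite key; ring).
  destruct (Rmult_integral _ _ z); lra.
Qed.

Lemma orthogonal_decomposition (n v : pt) :
  dot n v = 0 ->
  norm2 n * fst v = - (cross n v * snd n) /\ norm2 n * snd v = cross n v * fst n.
Proof.
  destruct n as [n1 n2], v as [v1 v2]; unfold norm2, dot, cross; cbn [fst snd].
  intro h; split.
  - transitivity ((n1 * v1 + n2 * v2) * n1 - (n1 * v2 - n2 * v1) * n2); [ring | rewrite h; ring].
  - transitivity ((n1 * v1 + n2 * v2) * n2 + (n1 * v2 - n2 * v1) * n1); [ring | rewrite h; ring].
Qed.

Lemma normals_independent (n1 n2 P Q R S : pt) :
  norm2 n1 <> 0 -> norm2 n2 <> 0 ->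
  dot n1 P = dot n1 Q -> dot n2 R = dot n2 S -> not_parallel P Q R S ->
  cross n1 n2 <> 0.
Proof.
  intros hn1 hn2 hPQ hRS hpar e.
  set (v := vsub Q P); set (w := vsub S R).
  assert (hv : dot n1 v = 0) by (unfold v, vsub, dot in *; cbn [fst snd]; lra).
  assert (hw : dot n2 w = 0) by (unfold w, vsub, dot in *; cbn [fst snd]; lra).
  destruct (orthogonal_decomposition n1 v hv) as [v1 v2].
  destruct (orthogonal_decomposition n2 w hw) as [w1 w2].
  assert (key : norm2 n1 * norm2 n2 * cross v w = cross n1 v * cross n2 w * cross n1 n2).
  { transitivity ((norm2 n1 * fst v) * (norm2 n2 * snd w) - (norm2 n1 * snd v) * (norm2 n2 * fst w));
      [unfold cross; ring | rewrite v1, v2, w1, w2; unfold cross; ring]. }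
  rewrite e, Rmult_0_r in key.
  apply hpar; unfold not_parallel, cross_dir.
  destruct (Rmult_integral _ _ key) as [z | z].
  - destruct (Rmult_integral _ _ z); contradiction.
  - exact z.
Qed.

Lemma concurrent_lines (n1 n2 n3 : pt) (h1 h2 h3 : R) (X : pt) :
  cross n1 n2 <> 0 -> dot n1 X = h1 -> dot n2 X = h2 ->
  det3 n1 h1 n2 h2 n3 h3 = 0 -> dot n3 X = h3.
Proof.
  intros hd hX1 hX2 hdet.
  assert (key : cross n1 n2 * (dot n3 X - h3) =
    cross n3 n2 * (dot n1 X - h1) + cross n1 n3 * (dot n2 X - h2) - det3 n1 h1 n2 h2 n3 h3).
  { destruct n1, n2, n3, X; unfold det3, cross, dot; cbn [fst snd]; ring. }
  rewrite hX1, hX2, hdet in key.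
  assert (z : cross n1 n2 * (dot n3 X - h3) = 0) by (rewrite key; ring).
  destruct (Rmult_integral _ _ z); [contradiction | lra].
Qed.

Lemma on_line_dir_of_level (n Q X : pt) :
  dot n X = dot n Q -> on_line_dir X Q (- snd n, fst n).
Proof.
  destruct n, Q, X; unfold on_line_dir, dot; cbn [fst snd]; intro h; lra.
Qed.

Lemma quarter_turn_nonzero (n : pt) : norm2 n <> 0 -> (- snd n, fst n) <> (0, 0).
Proof.
  intros hn e; apply hn.
  pose proof (f_equal fst e) as e1; pose proof (f_equal snd e) as e2; cbn [fst snd] in e1, e2.
  unfold norm2, dot; rewrite e2; replace (snd n) with 0 by lra; ring.
Qed.

Lemma orthogonal_to_independent (v1 v2 w : pt) :
  cross v1 v2 <> 0 -> dot v1 w = 0 -> dot v2 w = 0 -> w = (0, 0).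
Proof.
  destruct v1 as [p q], v2 as [r s], w as [w1 w2]; unfold cross, dot; cbn [fst snd].
  intros hd h1 h2.
  assert (e1 : (p * s - q * r) * w1 = s * (p * w1 + q * w2) - q * (r * w1 + s * w2)) by ring.
  assert (e2 : (p * s - q * r) * w2 = p * (r * w1 + s * w2) - r * (p * w1 + q * w2)) by ring.
  rewrite h1, h2 in e1, e2.
  assert (z1 : (p * s - q * r) * w1 = 0) by (rewrite e1; ring).
  assert (z2 : (p * s - q * r) * w2 = 0) by (rewrite e2; ring).
  destruct (Rmult_integral _ _ z1); [contradiction |].
  destruct (Rmult_integral _ _ z2); [contradiction |].
  subst; reflexivity.
Qed.

(* A non-degenerate triangle has at most one circumcenter: the difference of two
   circumcenters is orthogonal to two independent sides. *)
Lemma circumcenter_unique (P1 P2 P3 C C' : pt) :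
  cross_dir P1 P2 P1 P3 <> 0 ->
  is_circumcenter C P1 P2 P3 -> is_circumcenter C' P1 P2 P3 -> C = C'.
Proof.
  intros hnd [h12 h23] [h12' h23'].
  assert (side : forall P Q, sqdist C P = sqdist C Q -> sqdist C' P = sqdist C' Q ->
                   dot (vsub Q P) (vsub C C') = 0).
  { intros P Q e e'.
    transitivity ((sqdist C P - sqdist C Q - (sqdist C' P - sqdist C' Q)) / 2);
      [destruct P, Q, C, C'; unfold sqdist, dot, vsub; cbn [fst snd]; field
      | rewrite e, e'; field]. }
  assert (z := orthogonal_to_independent (vsub P2 P1) (vsub P3 P1) (vsub C C') hnd
                 (side P1 P2 h12 h12') (side P1 P3 (eq_trans h12 h23) (eq_trans h12' h23'))).
  destruct C, C'; unfold vsub in z; cbn [fst snd] in z; injection z as z1 z2.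
  f_equal; lra.
Qed.

Lemma equilateral_centroid_circumcenter (p q r : pt) :
  equilateral p q r -> is_circumcenter (centroid p q r) p q r.
Proof.
  destruct p as [p1 p2], q as [q1 q2], r as [r1 r2].
  unfold equilateral, is_circumcenter, sqdist, centroid; cbn [fst snd]; intros [h1 h2].
  split; apply Rminus_diag_uniq.
  - transitivity ((((r1 - p1) ^ 2 + (r2 - p2) ^ 2) - ((q1 - r1) ^ 2 + (q2 - r2) ^ 2)) / 3);
      [field | rewrite <- h2; field].
  - transitivity ((((p1 - q1) ^ 2 + (p2 - q2) ^ 2) - ((r1 - p1) ^ 2 + (r2 - p2) ^ 2)) / 3);
      [field | rewrite h1, h2; field].
Qed.

Definition cusp_param (u s : R) : Prop := cos (3 * s + u) = 1 /\ sin (3 * s + u) = 0.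

Lemma cos_sin_sq (t : R) : cos t ^ 2 + sin t ^ 2 = 1.
Proof. pose proof (sin2_cos2 t) as h; unfold Rsqr in h; lra. Qed.

Lemma cos_triple (s : R) : cos (3 * s) = cos s * (4 * cos s ^ 2 - 3).
Proof.
  replace (3 * s) with (2 * s + s) by ring.
  rewrite cos_plus, cos_2a_cos, sin_2a.
  replace (2 * sin s * cos s * sin s) with (2 * cos s * (sin s)²) by (unfold Rsqr; ring).
  rewrite sin2; unfold Rsqr; ring.
Qed.

Lemma sin_triple (s : R) : sin (3 * s) = sin s * (4 * cos s ^ 2 - 1).
Proof.
  replace (3 * s) with (2 * s + s) by ring.
  rewrite sin_plus, cos_2a_cos, sin_2a; ring.
Qed.

Lemma cusp_param_triple (u s : R) :
  cusp_param u s -> cos u = cos (3 * s) /\ sin u = - sin (3 * s).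
Proof.
  intros [hc hs]; replace u with ((3 * s + u) - 3 * s) by ring.
  rewrite cos_minus, sin_minus, hc, hs; split; ring.
Qed.

Lemma cusp_param_shift (u s : R) :
  cusp_param u s -> cos (s + u) = cos (2 * s) /\ sin (s + u) = - sin (2 * s).
Proof.
  intros [hc hs]; replace (s + u) with ((3 * s + u) - 2 * s) by ring.
  rewrite cos_minus, sin_minus, hc, hs; split; ring.
Qed.

Lemma cusp_formula (a b c u s : R) :
  0 < a -> 0 < b -> c ^ 2 = a ^ 2 - b ^ 2 -> cusp_param u s ->
  Defs.Delta a b c u s =
    (/ a * (3 * c ^ 2 / 2 * cos s - (a ^ 2 + b ^ 2) / 2 * cos u),
     / b * (- (3 * c ^ 2 / 2 * sin s) - (a ^ 2 + b ^ 2) / 2 * sin u)).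
Proof.
  intros ha hb hc hs.
  destruct (cusp_param_triple u s hs) as [hcu hsu].
  destruct (cusp_param_shift u s hs) as [hc2 hs2].
  unfold Defs.Delta; rewrite hc2, hs2, hcu, hsu, cos_triple, sin_triple, cos_2a_cos, sin_2a, hc.
  f_equal; field; lra.
Qed.

(* The three lines of the construction: for a cusp parameter t, the side of T
   opposite P(t), the side of T' opposite Delta(t), and the perspectrix. *)

Definition side_normal (a b t : R) : pt := (/ a * cos t, / b * sin t).
Definition side_level : R := - (1 / 2).
Definition cusp_side_normal (a b t : R) : pt := (a * cos t, - b * sin t).
Definition cusp_side_level (a b c t : R) : R :=
  - (3 * c ^ 2 / 4) - (a ^ 2 + b ^ 2) / 2 * cos (2 * t).
Definition perspectrix_normal (a b u : R) : pt := (b * cos u, - a * sin u).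
Definition perspectrix_level (a b c : R) : R := a * b * c ^ 2 / (a ^ 2 + b ^ 2).

(* A point of the ellipse a third of a turn away from P(t) lies on the side
   opposite P(t), since cos t cos s + sin t sin s = cos (t - s). *)
Lemma ellipse_on_side (a b t s : R) :
  0 < a -> 0 < b -> cos (t - s) = - (1 / 2) ->
  dot (side_normal a b t) (Pe a b s) = side_level.
Proof.
  intros ha hb hgap; unfold side_normal, side_level, Pe, dot; cbn [fst snd].
  rewrite <- hgap, cos_minus; field; lra.
Qed.

Lemma cusp_on_side (a b c u t s : R) :
  0 < a -> 0 < b -> c ^ 2 = a ^ 2 - b ^ 2 ->
  cusp_param u t -> cusp_param u s -> cos (t - s) = - (1 / 2) ->
  dot (cusp_side_normal a b t) (Defs.Delta a b c u s) = cusp_side_level a b c t.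
Proof.
  intros ha hb hc ht hs hgap.
  destruct (cusp_param_shift u t ht) as [hct _].
  rewrite (cusp_formula a b c u s ha hb hc hs).
  unfold cusp_side_normal, cusp_side_level, dot; cbn [fst snd].
  rewrite <- hct, cos_plus.
  transitivity (3 * c ^ 2 / 2 * cos (t - s) - (a ^ 2 + b ^ 2) / 2 * (cos t * cos u - sin t * sin u));
    [rewrite cos_minus; field; lra | rewrite hgap; field].
Qed.

(* It rests on
   sin t cos u + cos t sin u = sin (t + u) = - sin 2t  and
   sin t cos u - cos t sin u = sin (t - u) = sin 4t. *)
Lemma sides_meet_on_perspectrix (a b c u t : R) :
  0 < a -> 0 < b -> c ^ 2 = a ^ 2 - b ^ 2 -> cusp_param u t ->
  det3 (side_normal a b t) side_level (cusp_side_normal a b t) (cusp_side_level a b c t)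
       (perspectrix_normal a b u) (perspectrix_level a b c) = 0.
Proof.
  intros ha hb hc ht.
  destruct ht as [h3c h3s].
  assert (e_plus : sin t * cos u + cos t * sin u = - (2 * sin t * cos t)).
  { rewrite <- sin_2a, <- sin_plus.
    replace (t + u) with ((3 * t + u) - 2 * t) by ring.
    rewrite sin_minus, h3c, h3s; ring. }
  assert (e_minus : sin t * cos u - cos t * sin u = 2 * (2 * sin t * cos t) * cos (2 * t)).
  { rewrite <- sin_2a, <- sin_2a, <- sin_minus.
    replace (t - u) with (2 * (2 * t) - (3 * t + u)) by ring.
    rewrite sin_minus, h3c, h3s; ring. }
  assert (hS : a ^ 2 + b ^ 2 <> 0) by nra.
  unfold det3, cross, side_normal, side_level, cusp_side_normal, cusp_side_level,
    perspectrix_normal, perspectrix_level; cbn [fst snd].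
  rewrite hc.
  transitivity (- (1 / 2) * ((a ^ 2 + b ^ 2) / 2 * (sin t * cos u - cos t * sin u)
                  - (a ^ 2 - b ^ 2) / 2 * (sin t * cos u + cos t * sin u))
                + (- (3 * (a ^ 2 - b ^ 2) / 4) - (a ^ 2 + b ^ 2) / 2 * cos (2 * t))
                  * (sin t * cos u + cos t * sin u)
                - (a ^ 2 - b ^ 2) * (sin t * cos t));
    [field; lra | rewrite e_plus, e_minus; field].
Qed.

Lemma scaled_unit_nonzero (p q t : R) :
  p <> 0 -> q <> 0 -> norm2 (p * cos t, q * sin t) <> 0.
Proof.
  intros hp hq h; unfold norm2, dot in h; cbn [fst snd] in h.
  destruct (Rplus_sqr_eq_0 _ _ h) as [h1 h2].
  destruct (Rmult_integral _ _ h1) as [|hc]; [contradiction |].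
  destruct (Rmult_integral _ _ h2) as [|hs]; [contradiction |].
  pose proof (cos_sin_sq t) as e; rewrite hc, hs in e; lra.
Qed.

Lemma side_intersection_on_perspectrix (a b c u t s1 s2 : R) (X : pt) :
  0 < a -> 0 < b -> c ^ 2 = a ^ 2 - b ^ 2 ->
  cusp_param u t -> cusp_param u s1 -> cusp_param u s2 ->
  cos (t - s1) = - (1 / 2) -> cos (t - s2) = - (1 / 2) ->
  not_parallel (Pe a b s1) (Pe a b s2) (Defs.Delta a b c u s1) (Defs.Delta a b c u s2) ->
  on_line X (Pe a b s1) (Pe a b s2) ->
  on_line X (Defs.Delta a b c u s1) (Defs.Delta a b c u s2) ->
  dot (perspectrix_normal a b u) X = perspectrix_level a b c.
Proof.
  intros ha hb hc ht hs1 hs2 g1 g2 hpar hX hX'.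
  destruct (not_parallel_distinct _ _ _ _ hpar) as [d d'].
  pose proof (ellipse_on_side a b t s1 ha hb g1) as p1.
  pose proof (ellipse_on_side a b t s2 ha hb g2) as p2.
  pose proof (cusp_on_side a b c u t s1 ha hb hc ht hs1 g1) as q1.
  pose proof (cusp_on_side a b c u t s2 ha hb hc ht hs2 g2) as q2.
  apply (concurrent_lines (side_normal a b t) (cusp_side_normal a b t) _
           side_level (cusp_side_level a b c t) _ X).
  - apply (normals_independent _ _ _ _ _ _
             (scaled_unit_nonzero (/ a) (/ b) t (Rinv_neq_0_compat a ltac:(lra))
                (Rinv_neq_0_compat b ltac:(lra)))
             (scaled_unit_nonzero a (- b) t ltac:(lra) ltac:(lra))
             (eq_trans p1 (eq_sym p2)) (eq_trans q1 (eq_sym q2)) hpar).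
  - exact (on_line_level _ _ _ _ X p1 p2 d hX).
  - exact (on_line_level _ _ _ _ X q1 q2 d' hX').
  - exact (sides_meet_on_perspectrix a b c u t ha hb hc ht).
Qed.

Definition ellipse_circumcenter (a b c u : R) : pt :=
  (c ^ 2 * cos u / (4 * a), - (c ^ 2 * sin u / (4 * b))).

(* C0 is at the same distance from P(s) for every cusp parameter s, because
   |C0 - P(s)|^2 = |C0|^2 - (c^2/2) cos (s + u) + a^2 cos^2 s + b^2 sin^2 s
   and cos (s + u) = cos 2s. *)
Lemma circumcenter_equidistant (a b c u s : R) :
  0 < a -> 0 < b -> c ^ 2 = a ^ 2 - b ^ 2 -> cusp_param u s ->
  sqdist (ellipse_circumcenter a b c u) (Pe a b s) =
    norm2 (ellipse_circumcenter a b c u) + b ^ 2 + c ^ 2 / 2.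
Proof.
  intros ha hb hc hs.
  destruct (cusp_param_shift u s hs) as [hcs _].
  rewrite cos_plus, cos_2a_cos in hcs.
  transitivity (norm2 (ellipse_circumcenter a b c u)
                - c ^ 2 / 2 * (cos s * cos u - sin s * sin u)
                + a ^ 2 * cos s ^ 2 + b ^ 2 * sin s ^ 2);
    [unfold sqdist, norm2, dot, ellipse_circumcenter, Pe; cbn [fst snd]; field; lra |].
  rewrite hcs.
  replace (sin s ^ 2) with (1 - cos s ^ 2) by (pose proof (cos_sin_sq s); lra).
  rewrite hc; field.
Qed.

Lemma ellipse_circumcenter_nonzero (a b c u : R) :
  0 < a -> 0 < b -> 0 < c -> ellipse_circumcenter a b c u <> (0, 0).
Proof.
  intros ha hb hc h; unfold ellipse_circumcenter in h.
  pose proof (f_equal fst h) as h1; pose proof (f_equal snd h) as h2; cbn [fst snd] in h1, h2.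
  assert (hcu : cos u = 0).
  { replace (cos u) with (c ^ 2 * cos u / (4 * a) * (4 * a / c ^ 2)) by (field; lra).
    rewrite h1; ring. }
  assert (hsu : sin u = 0).
  { replace (sin u) with (- (c ^ 2 * sin u / (4 * b)) * (- (4 * b / c ^ 2))) by (field; lra).
    rewrite h2; ring. }
  pose proof (cos_sin_sq u) as e; rewrite hcu, hsu in e; lra.
Qed.

(* Triangles inscribed in the ellipse whose parameters are equally spaced are the
   images of equilateral triangles under diag(a, b); their centroid is the center,
   since cos th + cos (th - w) + cos (th - 2w) = 0 when cos w = -1/2. *)
Lemma equispaced_centroid (a b th w : R) :
  cos w = - (1 / 2) ->
  centroid (Pe a b th) (Pe a b (th - w)) (Pe a b (th - 2 * w)) = (0, 0).
Proof.
  intro hw; unfold centroid, Pe; cbn [fst snd].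
  rewrite !cos_minus, !sin_minus, cos_2a_cos, sin_2a, hw.
  f_equal; field.
Qed.

Lemma ellipse_chord_cross (a b r s t : R) :
  cross_dir (Pe a b r) (Pe a b s) (Pe a b r) (Pe a b t) =
    a * b * (sin (s - r) + sin (t - s) + sin (r - t)).
Proof. unfold cross_dir, Pe; cbn [fst snd]; rewrite !sin_minus; ring. Qed.

Lemma equispaced_nondegenerate (a b th w : R) :
  0 < a -> 0 < b -> cos w = - (1 / 2) -> 0 < sin w ->
  cross_dir (Pe a b th) (Pe a b (th - w)) (Pe a b th) (Pe a b (th - 2 * w)) <> 0.
Proof.
  intros ha hb hcw hsw.
  rewrite ellipse_chord_cross.
  replace (th - w - th) with (- w) by ring.
  replace (th - 2 * w - (th - w)) with (- w) by ring.
  replace (th - (th - 2 * w)) with (2 * w) by ring.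
  rewrite sin_neg, sin_2a, hcw.
  assert (0 < a * b * sin w) by (repeat apply Rmult_lt_0_compat; lra).
  lra.
Qed.

Definition third_turn : R := 2 * (PI / 3).

Lemma cos_third_turn : cos third_turn = - (1 / 2).
Proof. unfold third_turn; rewrite cos_2PI3; field. Qed.

Lemma sin_third_turn_pos : 0 < sin third_turn.
Proof. unfold third_turn; apply sin_gt_0; pose proof PI_RGT_0; lra. Qed.

Lemma cos_two_third_turns : cos (2 * third_turn) = - (1 / 2).
Proof. rewrite cos_2a_cos, cos_third_turn; field. Qed.

Lemma tcusp_second (u : R) : tcusp u 2 = tcusp u 1 - third_turn.
Proof. unfold tcusp, third_turn; cbn [INR]; field. Qed.

Lemma tcusp_third (u : R) : tcusp u 3 = tcusp u 1 - 2 * third_turn.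
Proof. unfold tcusp, third_turn; cbn [INR]; field. Qed.

(* Every t_i is a cusp parameter: 3 t_i + u = -2 pi (i - 1). *)
Lemma tcusp_cusp_param (u : R) (k : nat) : cusp_param u (tcusp u (S k)).
Proof.
  unfold cusp_param.
  replace (3 * tcusp u (S k) + u) with (- (0 + 2 * INR k * PI))
    by (unfold tcusp; rewrite S_INR; field).
  rewrite cos_neg, sin_neg, cos_period, sin_period, cos_0, sin_0; split; ring.
Qed.

Lemma tcusp_gaps (u : R) :
  let t1 := tcusp u 1 in let t2 := tcusp u 2 in let t3 := tcusp u 3 in
  cos (t1 - t2) = - (1 / 2) /\ cos (t1 - t3) = - (1 / 2) /\
  cos (t2 - t1) = - (1 / 2) /\ cos (t2 - t3) = - (1 / 2) /\
  cos (t3 - t1) = - (1 / 2) /\ cos (t3 - t2) = - (1 / 2).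
Proof.
  cbv zeta; rewrite tcusp_second, tcusp_third.
  set (t := tcusp u 1).
  replace (t - (t - third_turn)) with third_turn by ring.
  replace (t - (t - 2 * third_turn)) with (2 * third_turn) by ring.
  replace (t - third_turn - t) with (- third_turn) by ring.
  replace (t - third_turn - (t - 2 * third_turn)) with third_turn by ring.
  replace (t - 2 * third_turn - t) with (- (2 * third_turn)) by ring.
  replace (t - 2 * third_turn - (t - third_turn)) with (- third_turn) by ring.
  rewrite !cos_neg, cos_third_turn, cos_two_third_turns; tauto.
Qed.

Lemma cusp_triangle_centroid (a b u : R) :
  centroid (Pi a b u 1) (Pi a b u 2) (Pi a b u 3) = (0, 0).
Proof.
  unfold Pi; rewrite tcusp_second, tcusp_third.
  exact (equispaced_centroid a b _ _ cos_third_turn).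
Qed.

Lemma cusp_triangle_nondegenerate (a b u : R) :
  0 < a -> 0 < b -> cross_dir (Pi a b u 1) (Pi a b u 2) (Pi a b u 1) (Pi a b u 3) <> 0.
Proof.
  intros ha hb; unfold Pi; rewrite tcusp_second, tcusp_third.
  exact (equispaced_nondegenerate a b _ _ ha hb cos_third_turn sin_third_turn_pos).
Qed.

Lemma cusp_triangle_circumcenter (a b c u : R) :
  0 < a -> 0 < b -> c ^ 2 = a ^ 2 - b ^ 2 ->
  is_circumcenter (ellipse_circumcenter a b c u) (Pi a b u 1) (Pi a b u 2) (Pi a b u 3).
Proof.
  intros ha hb hc; unfold is_circumcenter, Pi.
  rewrite (circumcenter_equidistant a b c u _ ha hb hc (tcusp_cusp_param u 0)),
          (circumcenter_equidistant a b c u _ ha hb hc (tcusp_cusp_param u 1)),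
          (circumcenter_equidistant a b c u _ ha hb hc (tcusp_cusp_param u 2)).
  split; reflexivity.
Qed.

Lemma cusp_triangle_circumcenter_unique (a b c u : R) (C : pt) :
  0 < a -> 0 < b -> c ^ 2 = a ^ 2 - b ^ 2 ->
  is_circumcenter C (Pi a b u 1) (Pi a b u 2) (Pi a b u 3) ->
  C = ellipse_circumcenter a b c u.
Proof.
  intros ha hb hc hC.
  exact (circumcenter_unique _ _ _ _ _ (cusp_triangle_nondegenerate a b u ha hb) hC
           (cusp_triangle_circumcenter a b c u ha hb hc)).
Qed.

Lemma perspectrix_orthogonal_to_euler (a b c u : R) :
  0 < a -> 0 < b ->
  dot (- snd (perspectrix_normal a b u), fst (perspectrix_normal a b u))
      (vsub (ellipse_circumcenter a b c u) (0, 0)) = 0.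
Proof.
  intros ha hb.
  unfold perspectrix_normal, ellipse_circumcenter, dot, vsub; cbn [fst snd]; field; lra.
Qed.

Theorem theorem8p4 (a b c u : R)
  (hb : 0 < b) (hab : b < a) (hc : 0 < c) (hc2 : c ^ 2 = a ^ 2 - b ^ 2) :
  let P1 := Pi a b u 1 in let P2 := Pi a b u 2 in let P3 := Pi a b u 3 in
  let P1' := Pi' a b c u 1 in let P2' := Pi' a b c u 2 in let P3' := Pi' a b c u 3 in
  let G := centroid P1 P2 P3 in
  (* T is never equilateral; its Euler line GC is well defined *)
  ~ equilateral P1 P2 P3 /\
  (exists C, is_circumcenter C P1 P2 P3) /\
  (forall C, is_circumcenter C P1 P2 P3 -> C <> G) /\
  (* perspectrix statement *)
  (not_parallel P1 P2 P1' P2' -> not_parallel P1 P3 P1' P3' ->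
   not_parallel P2 P3 P2' P3' ->
   forall X12 X13 X23 : pt,
     on_line X12 P1 P2 -> on_line X12 P1' P2' ->
     on_line X13 P1 P3 -> on_line X13 P1' P3' ->
     on_line X23 P2 P3 -> on_line X23 P2' P3' ->
     exists Q d : pt, d <> (0, 0) /\
       on_line_dir X12 Q d /\ on_line_dir X13 Q d /\ on_line_dir X23 Q d /\
       forall C, is_circumcenter C P1 P2 P3 -> dot d (vsub C G) = 0).
Proof.
  cbv zeta.
  assert (ha : 0 < a) by lra.
  pose proof (cusp_triangle_circumcenter a b c u ha hb hc2) as hC0.
  pose proof (ellipse_circumcenter_nonzero a b c u ha hb hc) as hnz.
  rewrite cusp_triangle_centroid.
  split; [| split; [| split]].
  - intro heq; apply hnz; rewrite <- (cusp_triangle_centroid a b u).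
    symmetry; apply (cusp_triangle_circumcenter_unique a b c u _ ha hb hc2).
    exact (equilateral_centroid_circumcenter _ _ _ heq).
  - exists (ellipse_circumcenter a b c u); exact hC0.
  - intros C hC; rewrite (cusp_triangle_circumcenter_unique a b c u C ha hb hc2 hC); exact hnz.
  - intros np12 np13 np23 X12 X13 X23 h12 h12' h13 h13' h23 h23'.
    set (N := perspectrix_normal a b u).
    destruct (tcusp_gaps u) as (g12 & g13 & g21 & g23 & g31 & g32).
    pose proof (tcusp_cusp_param u 0) as k1.
    pose proof (tcusp_cusp_param u 1) as k2.
    pose proof (tcusp_cusp_param u 2) as k3.
    assert (hX12 : dot N X12 = perspectrix_level a b c)
      by exact (side_intersection_on_perspectrix a b c u _ _ _ X12 ha hb hc2
                  k3 k1 k2 g31 g32 np12 h12 h12').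
    assert (on_N : forall X, dot N X = perspectrix_level a b c ->
                             on_line_dir X X12 (- snd N, fst N))
      by (intros X hX; apply on_line_dir_of_level; congruence).
    exists X12, (- snd N, fst N); split; [| split; [| split; [| split]]].
    + exact (quarter_turn_nonzero N (scaled_unit_nonzero b (- a) u ltac:(lra) ltac:(lra))).
    + exact (on_N X12 hX12).
    + apply on_N; exact (side_intersection_on_perspectrix a b c u _ _ _ X13 ha hb hc2
                           k2 k1 k3 g21 g23 np13 h13 h13').
    + apply on_N; exact (side_intersection_on_perspectrix a b c u _ _ _ X23 ha hb hc2
                           k1 k2 k3 g12 g13 np23 h23 h23').
    + intros C hC; rewrite (cusp_triangle_circumcenter_unique a b c u C ha hb hc2 hC).
      exact (perspectrix_orthogonal_to_euler a b c u ha hb).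
Qed.
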